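(* For every $\lambda\in\mathcal{P}^+$, $$D\,m_\lambda=\big(\langle\lambda+\rho_g,\lambda+\rho_g\rangle-\langle\rho_g,\rho_g\rangle\big)m_\lambda+\frac{1}{|W_\lambda|}\sum_{\alpha\in R^+}\Big(g_\alpha\langle\lambda,\alpha\rangle\sum_{\ell=1}^{[\langle\lambda,\alpha^\vee\rangle/2]}|W_{\lambda-\ell\alpha}|\,|W^\alpha(\lambda-\ell\alpha)|\,m_{\lambda-\ell\alpha}\Big),$$ where $|W^\alpha(\lambda-\ell\alpha)|$ equals $1$ if $\ell=\langle\lambda,\alpha^\vee\rangle/2$ and $2$ otherwise.
   Context: $E$ is a real Euclidean space (inner product $\langle\cdot,\cdot\rangle$, dimension $N$) spanned by an irreducible, not necessarily reduced, root system $R$ with Weyl group $W$ and positive roots $R^+$; $\alpha^\vee=2\alpha/\langle\alpha,\alpha\rangle$. $\mathcal{P}$ is the weight lattice, $\mathcal{P}^+$ the dominant weights. Formal exponentials $e^\lambda$ ($\lambda\in\mathcal{P}$), $e^\lambda e^\mu=e^{\lambda+\mu}$, realized as functions $e^{i\langle\lambda,x\rangle}$; $m_\lambda=\sum_{\mu\in W(\lambda)}e^\mu$. For $x\in E$, $\partial_x$ is the derivation with $\partial_x e^\lambda=\langle\lambda,x\rangle e^\lambda$; $\partial_\alpha$ means $\partial_x$ with $x=\alpha$. Parameters $g_\alpha$ ($\alpha\in R$) are real numbers with $g_{w(\alpha)}=g_\alpha$ for all $w\in W$. The hypergeometric differential operator is $D=\sum_{j=1}^N\partial_{x_j}^2+\sum_{\alpha\in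 R^+}g_\alpha\frac{1+e^{-\alpha}}{1-e^{-\alpha}}\partial_\alpha$, with $x_1,\dots,x_N$ an orthonormal basis of $E$. $\rho_g=\frac12\sum_{\alpha\in R^+}g_\alpha\alpha$. $W_\mu=\{w\in W\mid w(\mu)=\mu\}$ is the stabilizer; $W^\alpha\subset W$ is the order-2 subgroup generated by the reflection $r_\alpha(x)=x-\langle x,\alpha^\vee\rangle\alpha$, and $W^\alpha(\mu)$ the $W^\alpha$-orbit of $\mu$. $[p]$ denotes the integral part of a nonnegative real number $p$. *)

From HB Require Import structures.
From mathcomp Require Import all_boot all_order all_algebra.
From mathcomp Require Import all_classical all_reals all_analysis.
From mathcomp Require Import complex finmap.

Set Implicit Arguments.
Unset Strict Implicit.
Unset Printing Implicit Defensive.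

Import Order.TTheory GRing.Theory Num.Theory.
Local Open Scope ring_scope.
Local Open Scope classical_set_scope.

Section RootData.
Variables (R : realType) (N : nat).
Local Notation E := 'rV[R]_N.

Definition dot (u v : E) : R := \sum_(i < N) u 0 i * v 0 i.

Definition obasis (j : 'I_N) : E := delta_mx 0 j.

Definition coroot (a : E) : E := (2 / dot a a) *: a.

(* reflection r_alpha(x) = x - <x, alpha^vee> alpha, acting on rows: x *m refl_mx a *)
Definition refl (a x : E) : E := x - dot x (coroot a) *: a.
Definition refl_mx (a : E) : 'M[R]_N := 1%:M - (coroot a)^T *m a.

(* (not necessarily reduced) root system spanning E *)
Definition is_root_system (Rs : seq E) : Prop :=
  [/\ uniq Rs, (0 : E) \notin Rs, (<<Rs>>%VS = fullv),
      (forall a b, a \in Rs -> b \in Rs -> refl a b \in Rs) &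
      (forall a b, a \in Rs -> b \in Rs -> dot b (coroot a) \is a Num.int)].

Definition irreducible_rs (Rs : seq E) : Prop :=
  forall S : pred E,
    (forall a b, a \in Rs -> b \in Rs -> S a -> ~~ S b -> dot a b = 0) ->
    all S Rs \/ all (predC S) Rs.

(* positive roots determined by a regular element v (<alpha, v> <> 0 for all roots) *)
Definition posroots (Rs : seq E) (v : E) : seq E := [seq a <- Rs | 0 < dot a v].

Definition weyl (Rs : seq E) : set 'M[R]_N :=
  [set w | exists s : seq E, all (fun a => a \in Rs) s /\
                          w = foldr (fun a M => refl_mx a *m M) 1%:M s].

Definition scard (A : set 'M[R]_N) : nat := size (enum_fset (fset_set A)).

Definition stab_card (Rs : seq E) (mu : E) : nat :=
  scard [set w | weyl Rs w /\ mu *m w = mu].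

Definition orbitW (Rs : seq E) (mu : E) : {fset E} :=
  fset_set [set mu *m w | w in weyl Rs].

Definition orbA_card (a mu : E) : nat := size (undup [:: mu; refl a mu]).

Definition is_weight (Rs : seq E) (l : E) : Prop :=
  forall a, a \in Rs -> dot l (coroot a) \is a Num.int.
Definition is_dominant (Rs : seq E) (v : E) (l : E) : Prop :=
  is_weight Rs l /\ forall a, a \in posroots Rs v -> 0 <= dot l (coroot a).

Definition rho_g (Rs : seq E) (v : E) (g : E -> R) : E :=
  2^-1 *: \sum_(a <- posroots Rs v) g a *: a.

(* formal exponentials realized as functions: e^mu(x) = exp(i <mu, x>) *)
Definition eexp (mu x : E) : R[i] := (cos (dot mu x) +i* sin (dot mu x))%C.

(* formal finite sums  sum c_k e^{mu_k}  (c_k real) and their realization *)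
Definition fsum := seq (R * E).
Definition ev (f : fsum) (x : E) : R[i] := \sum_(p <- f) (p.1)%:C%C * eexp p.2 x.

Definition fderiv (y : E) (f : fsum) : fsum := [seq (p.1 * dot p.2 y, p.2) | p <- f].

Definition mW (Rs : seq E) (mu : E) : fsum := [seq (1, nu) | nu <- enum_fset (orbitW Rs mu)].

Definition Dop (Rs : seq E) (v : E) (g : E -> R) (f : fsum) (x : E) : R[i] :=
  \sum_(j < N) ev (fderiv (obasis j) (fderiv (obasis j) f)) x
  + \sum_(a <- posroots Rs v)
      (g a)%:C%C * ((1 + eexp (- a) x) / (1 - eexp (- a) x)) * ev (fderiv a f) x.

End RootData.

From HB Require Import structures.
From mathcomp Require Import all_boot all_order all_algebra.
From mathcomp Require Import all_classical all_reals all_analysis.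
From mathcomp Require Import complex finmap.
From mathcomp Require Import ring lra zify.

(* Multiplying by [|W_lam|] turns every orbit sum into a sum over [W], so everything
   is expressed through [weyl_sum mu = \sum_w e^(mu w)].  As [W] is orthogonal, the
   Laplacian contributes [<lam, lam>].  In the first-order part, the invariance of [g]
   and the oddness of [c_a = (1 + e^-a) / (1 - e^-a)] allow one to symmetrize over
   [R] and substitute [a = b w], leaving [\sum_(b in R+) g_b <lam, b> \sum_w c_(b w) e^(lam w)].
   Pairing [w] with [r_b w], where [lam r_b = lam - n b] for [n = <lam, b^v>], and the
   identity [(1 + q) / (1 - q) * (1 - q^n) = 1 + q^n + 2 \sum_(0 < l < n) q^l] turn the
   inner sum into [weyl_sum lam + \sum_(0 < l < n) weyl_sum (lam - l b)].  The terms
   [l] and [n - l] agree because [r_b] swaps [lam - l b] and [lam - (n - l) b]; folding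
   them produces the orbit sizes [|W^b (lam - l b)|].  Finally [\sum g_b <lam, b>] is
   [2 <lam, rho_g>], which gives the eigenvalue. *)

Set Implicit Arguments.
Unset Strict Implicit.
Unset Printing Implicit Defensive.

Import Order.TTheory GRing.Theory Num.Theory.
Local Open Scope ring_scope.

Lemma perm_map_inj_sub (T : eqType) (s : seq T) (f : T -> T) :
  uniq s -> injective f -> {in s, forall y, f y \in s} -> perm_eq s (map f s).
Proof.
move=> us f_inj fs; have ufs : uniq (map f s) by rewrite map_inj_uniq.
have fs_s : {subset map f s <= s} by move=> _ /mapP[y ys ->]; exact: fs.
have [_ eq_fs] := uniq_min_size ufs fs_s (eq_leq (esym (size_map f s))).
by apply: uniq_perm => // y; rewrite eq_fs.
Qed.

Lemma sumr_pred1_uniq (I : eqType) (V : zmodType) (r : seq I) (i : I) (F : I -> V) :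
  uniq r -> i \in r -> \sum_(j <- r) (if i == j then F j else 0) = F i.
Proof.
move=> ur ir; rewrite -big_mkcond -big_filter.
have -> : [seq j <- r | i == j] = [:: i].
  by rewrite -(filter_pred1_uniq ur ir); apply: eq_filter => j /=; rewrite eq_sym.
by rewrite big_seq1.
Qed.

Lemma sumr_const_count (I : Type) (V : zmodType) (r : seq I) (P : pred I) (c : V) :
  \sum_(j <- r | P j) c = c *+ count P r.
Proof. by rewrite big_const_seq iter_addr_0. Qed.

Lemma finite_seqs_in (T : choiceType) (r : seq T) (n : nat) :
  finite_set [set s : seq T | all (mem r) s /\ size s = n].
Proof.
apply: (@sub_finite_set _ _ [set map val (t : n.-tuple (seq_sub r)) | t in setT]).
  move=> s [sr sn]; have size_s : size (pmap insub s : seq (seq_sub r)) == n.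
    by rewrite size_pmap_sub -sn -all_count.
  exists (Tuple size_s) => //=.
  by rewrite (pmap_filter (@insubK _ _ (seq_sub r))) (eq_filter (isSome_insub _)); apply/all_filterP.
exact/finite_image/finite_finset.
Qed.

Section InnerProduct.
Variables (R : realType) (N : nat).
Local Notation E := 'rV[R]_N.
Implicit Types (u w a : E).

Lemma dotE u w : dot u w = (u *m w^T) 0 0.
Proof. by rewrite /dot mxE; apply: eq_bigr => i _; rewrite mxE. Qed.

Lemma dotC u w : dot u w = dot w u.
Proof. by rewrite /dot; apply: eq_bigr => i _; rewrite mulrC. Qed.

Lemma dotDl u1 u2 w : dot (u1 + u2) w = dot u1 w + dot u2 w.
Proof. by rewrite /dot -big_split; apply: eq_bigr => i _; rewrite mxE mulrDl. Qed.

Lemma dotDr u w1 w2 : dot u (w1 + w2) = dot u w1 + dot u w2.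
Proof. by rewrite dotC dotDl !(dotC u). Qed.

Lemma dotZl k u w : dot (k *: u) w = k * dot u w.
Proof. by rewrite /dot mulr_sumr; apply: eq_bigr => i _; rewrite mxE mulrA. Qed.

Lemma dotZr k u w : dot u (k *: w) = k * dot u w.
Proof. by rewrite dotC dotZl dotC. Qed.

Lemma dotNl u w : dot (- u) w = - dot u w.
Proof. by rewrite -scaleN1r dotZl mulN1r. Qed.

Lemma dotNr u w : dot u (- w) = - dot u w.
Proof. by rewrite dotC dotNl dotC. Qed.

Lemma dotBl u1 u2 w : dot (u1 - u2) w = dot u1 w - dot u2 w.
Proof. by rewrite dotDl dotNl. Qed.

Lemma dotBr u w1 w2 : dot u (w1 - w2) = dot u w1 - dot u w2.
Proof. by rewrite dotDr dotNr. Qed.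

Lemma dot0l w : dot 0 w = 0.
Proof. by rewrite /dot big1 // => i _; rewrite mxE mul0r. Qed.

Lemma dot_sumr (I : Type) (r : seq I) (F : I -> E) u :
  dot u (\sum_(i <- r) F i) = \sum_(i <- r) dot u (F i).
Proof.
elim: r => [|i r IH]; first by rewrite !big_nil dotC dot0l.
by rewrite !big_cons dotDr IH.
Qed.

Lemma dot_eq0 u : (dot u u == 0) = (u == 0).
Proof.
apply/idP/idP => [|/eqP ->]; last by rewrite dot0l.
rewrite /dot psumr_eq0 => [/allP u0|i _]; last exact: sqr_ge0.
apply/eqP/matrixP => i j; rewrite (ord1 i) mxE.
by have := u0 j (mem_index_enum _); rewrite /= mulf_eq0 orbb => /eqP.
Qed.

Lemma sum_dot_obasis u : \sum_(j < N) dot u (obasis R j) * dot u (obasis R j) = dot u u.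
Proof.
have dot_obasis j : dot u (obasis R j) = u 0 j.
  rewrite /dot (bigD1 j) //= big1 => [|i ij]; rewrite /obasis mxE.
    by rewrite !eqxx mulr1 addr0.
  by rewrite (negbTE ij) andbF mulr0.
by apply: eq_bigr => j _; rewrite dot_obasis.
Qed.

Lemma dot_coroot a : a != 0 -> dot a (coroot a) = 2.
Proof. by move=> a0; rewrite /coroot dotZr divfK // dot_eq0. Qed.

Lemma refl_mxE u a : u *m refl_mx a = refl a u.
Proof.
rewrite /refl_mx /refl mulmxBr mulmx1 mulmxA; congr (_ - _).
by rewrite [u *m _]mx11_scalar mul_scalar_mx -dotE.
Qed.

Lemma dot_refl a u w : a != 0 -> dot (refl a u) (refl a w) = dot u w.
Proof.
move=> a0; have aa0 : dot a a != 0 by rewrite dot_eq0.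
rewrite /refl /coroot !dotBl !dotBr !dotZl !dotZr ?dotZl ?dotZr (dotC w a).
by field.
Qed.

Lemma refl_self a : a != 0 -> refl a a = - a.
Proof. by move=> a0; rewrite /refl dot_coroot // scaler_nat mulr2n opprD addrA subrr sub0r. Qed.

Lemma reflK a : a != 0 -> involutive (refl a).
Proof.
move=> a0 u; rewrite {1}/refl dotBl dotZl dot_coroot // /refl.
have -> : dot u (coroot a) - dot u (coroot a) * 2 = - dot u (coroot a) by ring.
by rewrite scaleNr opprK subrK.
Qed.

Lemma mulmx_ext (A B : 'M[R]_N) : (forall u : E, u *m A = u *m B) -> A = B.
Proof. by move=> AB; apply/row_matrixP => i; rewrite !rowE AB. Qed.

Lemma refl_mxK a : a != 0 -> refl_mx a *m refl_mx a = 1%:M.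
Proof. by move=> a0; apply: mulmx_ext => u; rewrite mulmxA !refl_mxE reflK // mulmx1. Qed.

End InnerProduct.

Section WeylGroup.
Local Open Scope classical_set_scope.
Variables (R : realType) (N : nat).
Local Notation E := 'rV[R]_N.
Local Notation M := 'M[R]_N.
Variable Rs : seq E.
Hypothesis hRs : is_root_system Rs.

Lemma root_neq0 a : a \in Rs -> a != 0.
Proof. by case: hRs => _ Rs0 _ _ _ aR; apply: contraNneq Rs0 => <-. Qed.

Lemma refl_root a b : a \in Rs -> b \in Rs -> refl a b \in Rs.
Proof. by case: hRs => _ _ _ Rs_refl _; apply: Rs_refl. Qed.

Lemma oppr_root a : a \in Rs -> - a \in Rs.
Proof. by move=> aR; rewrite -refl_self ?root_neq0 ?refl_root. Qed.

Definition weyl_word (s : seq E) : M := foldr (fun a A => refl_mx a *m A) 1%:M s.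

Lemma weyl_word_cat s1 s2 : weyl_word (s1 ++ s2) = weyl_word s1 *m weyl_word s2.
Proof. by elim: s1 => [|a s IH] /=; rewrite ?mul1mx // IH mulmxA. Qed.

Lemma weyl1 : weyl Rs 1%:M.
Proof. by exists [::]. Qed.

Lemma weylM (w1 w2 : M) : weyl Rs w1 -> weyl Rs w2 -> weyl Rs (w1 *m w2).
Proof.
move=> [s1 [h1 ->]] [s2 [h2 ->]]; exists (s1 ++ s2).
by rewrite all_cat h1 h2 -weyl_word_cat.
Qed.

Lemma weyl_refl a : a \in Rs -> weyl Rs (refl_mx a).
Proof. by move=> aR; exists [:: a]; rewrite /= aR mulmx1. Qed.

Lemma weyl_unit (w : M) : weyl Rs w -> exists2 w', w' *m w = 1%:M & w *m w' = 1%:M.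
Proof.
move=> [s [hs ->]].
suff inv_s : weyl_word (rev s) *m weyl_word s = 1%:M by exists (weyl_word (rev s)); last exact: mulmx1C.
elim: s hs => [|a s IH] /=; first by rewrite mulmx1.
move=> /andP [aR hs]; rewrite rev_cons -cats1 weyl_word_cat /= mulmx1.
by rewrite -mulmxA (mulmxA (refl_mx a)) refl_mxK ?root_neq0 // mul1mx IH.
Qed.

Lemma mulmx_weyl_inj (w : M) m : weyl Rs w -> injective (fun A : 'M[R]_(m, N) => A *m w).
Proof.
move=> /weyl_unit [w' _ ww'] A B /= AB.
by rewrite -(mulmx1 A) -(mulmx1 B) -ww' !mulmxA AB.
Qed.

Lemma weyl_mulmx_inj (w : M) : weyl Rs w -> injective (fun A : M => w *m A).
Proof.
move=> /weyl_unit [w' w'w _] A B /= AB.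
by rewrite -(mul1mx A) -(mul1mx B) -w'w -!mulmxA AB.
Qed.

Lemma weyl_dot (w : M) u u' : weyl Rs w -> dot (u *m w) (u' *m w) = dot u u'.
Proof.
move=> [s [hs ->]]; elim: s hs u u' => [|a s IH] /=; first by move=> _ u u'; rewrite !mulmx1.
move=> /andP [aR hs] u u'; rewrite !mulmxA !refl_mxE IH //.
exact/dot_refl/root_neq0.
Qed.

Lemma weyl_root (w : M) a : weyl Rs w -> a \in Rs -> a *m w \in Rs.
Proof.
move=> [s [hs ->]]; elim: s hs a => [|b s IH] /=; first by move=> _ a; rewrite mulmx1.
by move=> /andP [bR hs] a aR; rewrite mulmxA refl_mxE IH // refl_root.
Qed.

Lemma eq_mx_on_roots (A B : M) : {in Rs, forall a, a *m A = a *m B} -> A = B.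
Proof.
move=> AB; apply: mulmx_ext => u.
case: hRs => _ _ Rs_span _ _.
have /coord_span -> : u \in <<in_tuple Rs>>%VS by rewrite /= Rs_span memvf.
rewrite !mulmx_suml; apply: eq_bigr => i _; rewrite -!scalemxAl AB //.
exact: mem_nth.
Qed.

Lemma weyl_finite : finite_set (weyl Rs).
Proof.
have : finite_set ((fun A : M => map (fun a => a *m A) Rs) @^-1`
                   [set s | all (mem Rs) s /\ size s = size Rs]).
  apply: finite_preimage; last exact: finite_seqs_in.
  by move=> A B _ _ /eq_in_map; apply: eq_mx_on_roots.
apply: sub_finite_set => w ww; split; last by rewrite size_map.
by apply/allP => b /mapP [a aR ->]; apply: weyl_root.
Qed.

Lemma perm_roots_weyl (w : M) : weyl Rs w -> perm_eq Rs [seq a *m w | a <- Rs].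
Proof.
move=> ww; apply: perm_map_inj_sub; first by case: hRs.
  exact: (mulmx_weyl_inj ww).
by move=> a; apply: weyl_root.
Qed.

End WeylGroup.

Section OrbitStabilizer.
Variables (R : realType) (N : nat).
Local Notation E := 'rV[R]_N.
Local Notation M := 'M[R]_N.
Variable Rs : seq E.
Hypothesis hRs : is_root_system Rs.

Definition weyl_seq : seq M := enum_fset (fset_set (weyl Rs)).

Lemma mem_weyl_seq (w : M) : (w \in weyl_seq) <-> weyl Rs w.
Proof.
rewrite /weyl_seq -[w \in _]/(w \in fset_set (weyl Rs)) in_fset_set ?in_setE //.
exact: weyl_finite hRs.
Qed.

Lemma perm_weyl_seq_mulr (w : M) : weyl Rs w -> perm_eq weyl_seq [seq A *m w | A <- weyl_seq].
Proof.
move=> ww; apply: perm_map_inj_sub; first exact: fset_uniq.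
  exact: (mulmx_weyl_inj hRs ww).
by move=> A /mem_weyl_seq wA; apply/mem_weyl_seq/weylM.
Qed.

Lemma perm_weyl_seq_mull (w : M) : weyl Rs w -> perm_eq weyl_seq [seq w *m A | A <- weyl_seq].
Proof.
move=> ww; apply: perm_map_inj_sub; first exact: fset_uniq.
  exact: (weyl_mulmx_inj hRs ww).
by move=> A /mem_weyl_seq wA; apply/mem_weyl_seq/weylM.
Qed.

Definition orbit_seq (mu : E) : seq E := enum_fset (orbitW Rs mu).

Lemma mem_orbit_seq mu nu : (nu \in orbit_seq mu) <-> exists2 w, weyl Rs w & mu *m w = nu.
Proof.
rewrite /orbit_seq -[nu \in _]/(nu \in orbitW Rs mu) /orbitW in_fset_set ?in_setE //.
exact/finite_image/(weyl_finite hRs).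
Qed.

Lemma stab_card_count mu : stab_card Rs mu = count (fun w => mu *m w == mu) weyl_seq.
Proof.
rewrite /stab_card /scard -size_filter; apply/perm_size/uniq_perm.
- exact: fset_uniq.
- exact/filter_uniq/fset_uniq.
move=> w; rewrite mem_filter in_fset_set; last first.
  by apply: sub_finite_set (weyl_finite hRs) => ? [].
apply/idP/andP => [/set_mem [ww ->]|[/eqP wmu /mem_weyl_seq ww]]; last exact: mem_set.
by split; [rewrite eqxx | apply/mem_weyl_seq].
Qed.

Lemma stab_card_gt0 mu : (0 < stab_card Rs mu)%N.
Proof.
rewrite stab_card_count -has_count; apply/hasP; exists 1%:M; last by rewrite mulmx1.
exact/mem_weyl_seq/weyl1.
Qed.

Lemma count_weyl_seq_orbit mu nu : nu \in orbit_seq mu ->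
  count (fun w => mu *m w == nu) weyl_seq = stab_card Rs mu.
Proof.
move=> /mem_orbit_seq [w ww <-].
rewrite stab_card_count (permP (perm_weyl_seq_mulr ww)) count_map.
apply: eq_count => A /=; rewrite mulmxA.
by apply/eqP/eqP => [/(mulmx_weyl_inj hRs ww) | ->].
Qed.

Lemma sum_orbit_stab (V : zmodType) (f : E -> V) mu :
  (\sum_(nu <- orbit_seq mu) f nu) *+ stab_card Rs mu = \sum_(w <- weyl_seq) f (mu *m w).
Proof.
have -> : \sum_(w <- weyl_seq) f (mu *m w) =
    \sum_(w <- weyl_seq) \sum_(nu <- orbit_seq mu) (if mu *m w == nu then f nu else 0).
  apply: eq_big_seq => w /mem_weyl_seq ww; rewrite sumr_pred1_uniq ?fset_uniq //.
  by apply/mem_orbit_seq; exists w.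
rewrite exchange_big /= -sumrMnl; apply: eq_big_seq => nu nuO.
by rewrite -big_mkcond /= sumr_const_count count_weyl_seq_orbit.
Qed.

End OrbitStabilizer.

Section Exponentials.
Variables (R : realType) (N : nat).
Local Notation E := 'rV[R]_N.
Implicit Types (mu nu a x : E).

Lemma eexpD mu nu x : eexp (mu + nu) x = eexp mu x * eexp nu x.
Proof.
rewrite /eexp dotDl cosD sinD; apply/eqP; rewrite eq_complex /=.
by apply/andP; split; apply/eqP; ring.
Qed.

Lemma eexp0 x : eexp 0 x = 1.
Proof. by rewrite /eexp dot0l cos0 sin0. Qed.

Lemma eexpNK mu x : eexp (- mu) x * eexp mu x = 1.
Proof. by rewrite -eexpD addNr eexp0. Qed.

Lemma eexp_neq0 mu x : eexp mu x != 0.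
Proof.
apply/eqP => mu0; have := eexpNK mu x; rewrite mu0 mulr0 => /eqP.
by rewrite eq_sym oner_eq0.
Qed.

Lemma eexpB_natZ mu a x (l : nat) :
  eexp (mu - l%:R *: a) x = eexp mu x * eexp (- a) x ^+ l.
Proof.
elim: l mu => [|l IH] mu; first by rewrite scale0r subr0 expr0 mulr1.
by rewrite -natr1 scalerDl scale1r opprD addrA eexpD IH exprSr mulrA.
Qed.

Lemma ev_mW Rs mu x : ev (mW Rs mu) x = \sum_(nu <- orbit_seq Rs mu) eexp nu x.
Proof. by rewrite /ev /mW big_map; apply: eq_bigr => nu _; rewrite /= rmorph1 mul1r. Qed.

Lemma ev_fderiv_mW Rs mu y x :
  ev (fderiv y (mW Rs mu)) x = \sum_(nu <- orbit_seq Rs mu) (dot nu y)%:C%C * eexp nu x.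
Proof. by rewrite /ev /fderiv /mW -map_comp big_map; apply: eq_bigr => nu _; rewrite /= mul1r. Qed.

Definition Dcoef a x : R[i] := (1 + eexp (- a) x) / (1 - eexp (- a) x).

(* Away from the singular hyperplanes [Dcoef] is the odd function [-i cot (<a, x>/2)];
   on them both sides are [0] because [(1 + 1) / 0 = 0]. *)
Lemma Dcoef_opp a x : Dcoef (- a) x = - Dcoef a x.
Proof.
rewrite /Dcoef opprK.
have -> : eexp a x = (eexp (- a) x)^-1 by apply/esym/mulr1_eq; exact: eexpNK.
set q := eexp (- a) x; have q0 : q != 0 by exact: eexp_neq0.
have [->|q1] := eqVneq q 1; first by rewrite invr1 subrr !invr0 !mulr0 oppr0.
by field; rewrite q0 !subr_eq0 q1 eq_sym q1.
Qed.

Lemma Dop_mW Rs v (g : E -> R) mu x :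
  Dop Rs v g (mW Rs mu) x =
    \sum_(nu <- orbit_seq Rs mu) (dot nu nu)%:C%C * eexp nu x
  + \sum_(a <- posroots Rs v) (g a)%:C%C * Dcoef a x *
      \sum_(nu <- orbit_seq Rs mu) (dot nu a)%:C%C * eexp nu x.
Proof.
rewrite /Dop; congr (_ + _); last by apply: eq_bigr => a _; rewrite ev_fderiv_mW.
transitivity (\sum_(j < N) \sum_(nu <- orbit_seq Rs mu)
    (dot nu (obasis R j) * dot nu (obasis R j))%:C%C * eexp nu x).
  apply: eq_bigr => j _; rewrite /ev /fderiv /mW -!map_comp big_map.
  by apply: eq_bigr => nu _; rewrite /= mul1r.
rewrite exchange_big /=; apply: eq_bigr => nu _.
by rewrite -mulr_suml -rmorph_sum sum_dot_obasis.
Qed.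

End Exponentials.

Lemma geom_ratio_expansion (F : fieldType) (q : F) (n : nat) : q != 1 -> (0 < n)%N ->
  (1 + q) / (1 - q) * (1 - q ^+ n) = 1 + q ^+ n + (\sum_(1 <= l < n) q ^+ l) *+ 2.
Proof.
move=> q1 n0; have q1' : 1 - q != 0 by rewrite subr_eq0 eq_sym.
have -> : 1 - q ^+ n = (1 - q) * \sum_(0 <= i < n) q ^+ i.
  by rewrite -opprB subrX1 -mulNr opprB big_mkord.
rewrite mulrA divfK //; case: n n0 => // m _.
rewrite mulrDl mul1r mulr_sumr big_add1.
under [X in _ + X = _]eq_bigr do rewrite -exprS.
by rewrite [X in X + _ = _]big_nat_recl // [X in _ + X = _]big_nat_recr //= expr0; ring.
Qed.

Lemma big_nat_rev_tail (V : zmodType) (f : nat -> V) (m n : nat) : (m <= n)%N ->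
  \sum_(m.+1 <= j < n) f j = \sum_(1 <= i < n - m) f (n - i)%N.
Proof.
move=> mn; rewrite -add1n big_addn big_nat_rev.
by apply: eq_big_nat => i /andP [i1 i2]; congr f; lia.
Qed.

Lemma sum_fold_symmetric (V : zmodType) (f : nat -> V) (n : nat) :
  (forall l, (l <= n)%N -> f l = f (n - l)%N) ->
  \sum_(1 <= l < n) f l =
  \sum_(1 <= l < (n./2).+1) f l *+ (if l.*2 == n then 1 else 2).
Proof.
case: n => [|n] f_sym; first by rewrite !big_geq.
set m := (n.+1)./2.
rewrite (@big_cat_nat _ _ _ m.+1) /=; [|by rewrite /m; lia..].
transitivity (\sum_(1 <= l < m.+1) f l +
    \sum_(1 <= l < m.+1) (if l.*2 == n.+1 then 0 else f (n.+1 - l)%N)); last first.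
  rewrite -big_split; apply: eq_big_nat => l /andP [l1 l2] /=.
  case: ifP => _; first by rewrite addr0 mulr1n.
  by rewrite mulr2n -f_sym //; lia.
congr (_ + _); rewrite big_nat_rev_tail; last by rewrite /m; lia.
have [odd_n|even_n] := boolP (odd n).
  rewrite (_ : n.+1 - m = m)%N; last by rewrite /m; lia.
  rewrite (big_nat_recr m) /=; last by rewrite /m; lia.
  rewrite (_ : m.*2 == n.+1); last by rewrite /m; apply/eqP; lia.
  rewrite addr0; apply: eq_big_nat => l /andP [l1 l2].
  by case: ifP => // /eqP; lia.
rewrite (_ : n.+1 - m = m.+1)%N; last by rewrite /m; lia.
by apply: eq_big_nat => l _; case: ifP => // /eqP; lia.
Qed.

Lemma truncn_half (R : realType) (n : nat) : Num.truncn ((n%:R : R) / 2) = n./2.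
Proof.
apply: truncn_def.
have -> : (n%:R : R) = (odd n)%:R + (n./2)%:R * 2.
  by rewrite -[2]/(2%:R) -natrM -natrD muln2 odd_double_half.
rewrite -[(n./2).+1%:R]natr1; have m0 : (0 : R) <= (n./2)%:R by [].
by case: (odd n) => /=; apply/andP; split; lra.
Qed.

Lemma orbA_cardE (R : realType) (N : nat) (a mu : 'rV[R]_N) (k : R) :
  a != 0 -> dot mu (coroot a) = k -> orbA_card a mu = if k == 0 then 1%N else 2%N.
Proof.
move=> a0 mu_a; rewrite /orbA_card /refl mu_a /= inE.
suff -> : (mu == mu - k *: a) = (k == 0) by case: (k == 0).
apply/eqP/eqP => [|->]; last by rewrite scale0r subr0.
by move/eqP; rewrite -subr_eq0 opprB addrC subrK scaler_eq0 (negbTE a0) orbF => /eqP.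
Qed.

Lemma dot_rho_g (R : realType) (N : nat) (Rs : seq 'rV[R]_N) v g (lam : 'rV[R]_N) :
  let rho := rho_g Rs v g in
  dot (lam + rho) (lam + rho) - dot rho rho =
    dot lam lam + \sum_(a <- posroots Rs v) g a * dot lam a.
Proof.
move=> rho; have lam_rho : dot lam rho = 2^-1 * \sum_(a <- posroots Rs v) g a * dot lam a.
  by rewrite /rho /rho_g dotZr dot_sumr; congr (_ * _); apply: eq_bigr => a _; rewrite dotZr.
by rewrite !dotDl !dotDr (dotC rho lam) lam_rho; field.
Qed.

Section HypergeometricOperator.
Variables (R : realType) (N : nat).
Local Notation E := 'rV[R]_N.
Local Notation M := 'M[R]_N.
Local Notation C := R[i].
Variables (Rs : seq E) (v : E) (g : E -> R) (x : E).
Hypothesis hRs : is_root_system Rs.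
Hypothesis v_regular : forall a, a \in Rs -> dot a v != 0.
Hypothesis g_invariant : forall w a, weyl Rs w -> a \in Rs -> g (a *m w) = g a.
Hypothesis x_regular : forall a, a \in posroots Rs v -> eexp (- a) x != 1.
Local Notation P := (posroots Rs v).

Lemma g_opp a : a \in Rs -> g (- a) = g a.
Proof.
move=> aR; rewrite -refl_self ?(root_neq0 hRs) // -refl_mxE g_invariant //.
exact: weyl_refl.
Qed.

Lemma mem_posroots a : (a \in P) = (a \in Rs) && (0 < dot a v).
Proof. by rewrite mem_filter andbC. Qed.

Lemma opp_posroots_neg a : a \in Rs -> ~~ (0 < dot a v) -> - a \in P.
Proof.
move=> aR a_neg; rewrite mem_posroots oppr_root // dotNl oppr_gt0.
by rewrite lt_neqAle v_regular //= leNgt.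
Qed.

Lemma sum_roots_even (V : zmodType) (F : E -> V) :
  {in Rs, forall a, F (- a) = F a} -> \sum_(a <- Rs) F a = (\sum_(a <- P) F a) *+ 2.
Proof.
move=> F_even; rewrite (bigID (fun a => 0 < dot a v)) /= big_filter mulr2n; congr (_ + _).
have neg_pos : perm_eq [seq a <- Rs | ~~ (0 < dot a v)] [seq - a | a <- P].
  have uRs : uniq Rs by case: hRs.
  apply: uniq_perm; first exact: filter_uniq.
    by rewrite map_inj_uniq ?filter_uniq //; exact: oppr_inj.
  move=> a; rewrite mem_filter; apply/andP/mapP => [[a_neg aR]|[b]].
    by exists (- a); rewrite ?opprK // opp_posroots_neg.
  rewrite mem_posroots => /andP [bR b_pos] ->.
  by rewrite dotNl oppr_gt0 -leNgt ltW // oppr_root.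
rewrite -big_filter (perm_big _ neg_pos) big_map -[RHS]big_filter.
apply: eq_big_seq => a; rewrite mem_posroots => /andP [aR _].
by rewrite F_even.
Qed.

Lemma eexp_root_neq1 a : a \in Rs -> eexp (- a) x != 1.
Proof.
move=> aR; have [a_pos|a_neg] := boolP (0 < dot a v).
  by apply: x_regular; rewrite mem_posroots aR.
have := x_regular (opp_posroots_neg aR a_neg); rewrite opprK; apply: contra => /eqP a1.
by have := eexpNK a x; rewrite a1 mul1r => ->.
Qed.

Definition weyl_sum (mu : E) : C := \sum_(w <- weyl_seq Rs) eexp (mu *m w) x.

Lemma weyl_sum_invariant mu (w : M) : weyl Rs w -> weyl_sum (mu *m w) = weyl_sum mu.
Proof.
move=> ww; rewrite /weyl_sum [RHS](perm_big _ (perm_weyl_seq_mull hRs ww)) big_map.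
by apply: eq_bigr => A _; rewrite mulmxA.
Qed.

Lemma stab_card_mul_ev_mW mu : (stab_card Rs mu)%:R * ev (mW Rs mu) x = weyl_sum mu.
Proof. by rewrite ev_mW mulr_natl (sum_orbit_stab hRs (fun nu => eexp nu x)). Qed.

Variable lam : E.

Definition Dcoef_sum (b : E) : C := \sum_(w <- weyl_seq Rs) Dcoef (b *m w) x * eexp (lam *m w) x.

Lemma Dcoef_sum_opp b : Dcoef_sum (- b) = - Dcoef_sum b.
Proof. by rewrite /Dcoef_sum -sumrN; apply: eq_bigr => w _; rewrite mulNmx Dcoef_opp mulNr. Qed.

(* Symmetrize over all roots, then substitute [a = b w] for each [w]. *)
Lemma sum_posroots_Dcoef_weyl :
  \sum_(a <- P) (g a)%:C%C * Dcoef a x *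
     \sum_(w <- weyl_seq Rs) (dot (lam *m w) a)%:C%C * eexp (lam *m w) x
  = \sum_(b <- P) (g b * dot lam b)%:C%C * Dcoef_sum b.
Proof.
apply: (@pmulrnI _ 2) => //=.
have term_even (w : M) a : a \in Rs -> (g (- a))%:C%C * Dcoef (- a) x * (dot (lam *m w) (- a))%:C%C
    = (g a)%:C%C * Dcoef a x * (dot (lam *m w) a)%:C%C.
  by move=> aR; rewrite g_opp // Dcoef_opp dotNr rmorphN !mulrN mulNr opprK.
have reindex (w : M) : weyl Rs w ->
    \sum_(a <- Rs) (g a)%:C%C * Dcoef a x * (dot (lam *m w) a)%:C%C * eexp (lam *m w) x
    = \sum_(b <- Rs) (g b * dot lam b)%:C%C * (Dcoef (b *m w) x * eexp (lam *m w) x).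
  move=> ww; rewrite (perm_big _ (perm_roots_weyl hRs ww)) big_map; apply: eq_big_seq => b bR.
  rewrite g_invariant // -{2}(mulmx1 lam) (weyl_dot hRs) // mulmx1 rmorphM; ring.
transitivity (\sum_(w <- weyl_seq Rs) \sum_(a <- Rs)
    (g a)%:C%C * Dcoef a x * (dot (lam *m w) a)%:C%C * eexp (lam *m w) x).
  under eq_bigr => a _ do rewrite mulr_sumr.
  rewrite exchange_big /= -sumrMnl; apply: eq_bigr => w _.
  rewrite sum_roots_even => [|a aR]; last by rewrite term_even.
  by congr (_ *+ 2); apply: eq_bigr => a _; rewrite mulrA.
rewrite (eq_big_seq _ (fun w ww => reindex w (proj1 (mem_weyl_seq hRs w) ww))).
rewrite exchange_big /= -sum_roots_even => [|b bR]; last first.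
  by rewrite Dcoef_sum_opp g_opp // dotNr !mulrN rmorphN mulNr opprK.
by apply: eq_bigr => b _; rewrite /Dcoef_sum mulr_sumr.
Qed.

Lemma stab_card_mul_Dop_mW :
  (stab_card Rs lam)%:R * Dop Rs v g (mW Rs lam) x
  = (dot lam lam)%:C%C * weyl_sum lam + \sum_(b <- P) (g b * dot lam b)%:C%C * Dcoef_sum b.
Proof.
rewrite Dop_mW mulrDr -sum_posroots_Dcoef_weyl; congr (_ + _).
  rewrite mulr_natl (sum_orbit_stab hRs (fun nu => (dot nu nu)%:C%C * eexp nu x)).
  rewrite /weyl_sum mulr_sumr; apply: eq_big_seq => w /(mem_weyl_seq hRs) ww.
  by rewrite (weyl_dot hRs).
rewrite mulr_sumr; apply: eq_bigr => a _; rewrite mulrCA mulr_natl.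
by rewrite (sum_orbit_stab hRs (fun nu => (dot nu a)%:C%C * eexp nu x)).
Qed.

(* Reindexing by [w |-> r_b w] and [lam r_b = lam - n b] give
   [2 Dcoef_sum b = \sum_w c_(b w) (e^(lam w) - e^((lam - n b) w))], and
   [geom_ratio_expansion] spreads each term along the string [lam - l b]. *)
Lemma Dcoef_sum_string b (n : nat) : b \in Rs -> dot lam (coroot b) = n%:R -> (0 < n)%N ->
  Dcoef_sum b = weyl_sum lam + \sum_(1 <= l < n) weyl_sum (lam - l%:R *: b).
Proof.
move=> bR lam_b n0; apply: (@pmulrnI _ 2) => //=.
have lam_rb : lam *m refl_mx b = lam - n%:R *: b by rewrite refl_mxE /refl lam_b.
have eexp_string (w : M) l :
    eexp ((lam - l%:R *: b) *m w) x = eexp (lam *m w) x * eexp (- (b *m w)) x ^+ l.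
  by rewrite mulmxBl -scalemxAl eexpB_natZ.
have Dcoef_sum_rb : Dcoef_sum b =
    - \sum_(w <- weyl_seq Rs) Dcoef (b *m w) x * eexp ((lam - n%:R *: b) *m w) x.
  rewrite {1}/Dcoef_sum (perm_big _ (perm_weyl_seq_mull hRs (weyl_refl bR))) big_map -sumrN.
  apply: eq_bigr => w _; rewrite !mulmxA refl_mxE refl_self ?(root_neq0 hRs) //.
  by rewrite -lam_rb mulNmx Dcoef_opp mulNr.
rewrite mulr2n {1}Dcoef_sum_rb /Dcoef_sum -sumrN -big_split /=.
rewrite (eq_big_seq (fun w => eexp (lam *m w) x + eexp ((lam - n%:R *: b) *m w) x
   + (\sum_(1 <= l < n) eexp ((lam - l%:R *: b) *m w) x) *+ 2)); last first.
  move=> w /(mem_weyl_seq hRs) ww.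
  rewrite addrC -mulrBr eexp_string.
  set q := eexp (- (b *m w)) x; set e0 := eexp (lam *m w) x.
  have -> : e0 - e0 * q ^+ n = e0 * (1 - q ^+ n) by ring.
  rewrite mulrCA /Dcoef -/q geom_ratio_expansion ?eexp_root_neq1 ?weyl_root //.
  rewrite mulrDr mulrDr mulr1 mulrnAr mulr_sumr; congr (_ + _ + _ *+ 2).
  by apply: eq_bigr => l _; rewrite eexp_string.
rewrite !big_split /= exchange_big /= -lam_rb.
rewrite -[\sum_(w <- _) eexp (lam *m refl_mx b *m w) x]/(weyl_sum _) (weyl_sum_invariant _ (weyl_refl bR)).
by rewrite mulr2n /weyl_sum; ring.
Qed.

Lemma Dcoef_sum_fold b : b \in Rs -> dot lam (coroot b) \is a Num.int ->
  0 <= dot lam (coroot b) ->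
  (g b * dot lam b)%:C%C * Dcoef_sum b = (g b * dot lam b)%:C%C * (weyl_sum lam +
    \sum_(1 <= l < (Num.truncn (dot lam (coroot b) / 2)).+1)
       weyl_sum (lam - l%:R *: b) *+ orbA_card b (lam - l%:R *: b)).
Proof.
move=> bR lam_b_int lam_b_ge0; have b0 := root_neq0 hRs bR.
have : dot lam (coroot b) = (Num.truncn (dot lam (coroot b)))%:R.
  by rewrite truncnK // natrEint lam_b_int lam_b_ge0.
move: (Num.truncn _) => n lam_b; rewrite lam_b truncn_half.
case: n lam_b => [|n] lam_b.
  suff -> : dot lam b = 0 by rewrite mulr0 rmorph0 !mul0r.
  move: lam_b; rewrite /coroot dotZr => /eqP; rewrite mulf_eq0 => /orP [|/eqP //].
  by rewrite mulf_eq0 invr_eq0 dot_eq0 (negbTE b0) orbF pnatr_eq0.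
have string_b l : dot (lam - l%:R *: b) (coroot b) = n.+1%:R - l%:R * 2.
  by rewrite dotBl dotZl dot_coroot // lam_b.
rewrite (Dcoef_sum_string bR lam_b) //; congr (_ * (_ + _)).
rewrite (@sum_fold_symmetric _ (fun l => weyl_sum (lam - l%:R *: b))); last first.
  move=> l ln; rewrite -(weyl_sum_invariant _ (weyl_refl bR)) refl_mxE /refl string_b.
  by congr weyl_sum; rewrite natrB // -addrA -opprD -scalerDl; congr (_ - _ *: _); ring.
apply: eq_big_nat => l _; rewrite (orbA_cardE b0 (string_b l)).
by rewrite subr_eq0 -[2]/(2%:R) -natrM eqr_nat muln2 eq_sym.
Qed.

End HypergeometricOperator.

Theorem mainTheorem4 (R : realType) (N : nat) (Rs : seq 'rV[R]_N)
    (v : 'rV[R]_N) (g : 'rV[R]_N -> R) (lam x : 'rV[R]_N) :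
  is_root_system Rs -> irreducible_rs Rs ->
  (forall a, a \in Rs -> dot a v != 0) ->
  (forall w a, weyl Rs w -> a \in Rs -> g (a *m w) = g a) ->
  is_dominant Rs v lam ->
  (forall a, a \in posroots Rs v -> eexp (- a) x != 1) ->
  let rho := rho_g Rs v g in
  Dop Rs v g (mW Rs lam) x =
    (dot (lam + rho) (lam + rho) - dot rho rho)%:C%C * ev (mW Rs lam) x
    + ((stab_card Rs lam)%:R^-1)%:C%C *
      \sum_(a <- posroots Rs v)
        ((g a * dot lam a)%:C%C *
         \sum_(1 <= l < (Num.truncn (dot lam (coroot a) / 2)).+1)
           ((stab_card Rs (lam - l%:R *: a) * orbA_card a (lam - l%:R *: a))%:R
             * ev (mW Rs (lam - l%:R *: a)) x)).
Proof.
move=> hRs _ v_reg g_inv [lam_weight lam_dom] x_reg rho.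
set s := stab_card Rs lam.
have s_neq0 : (s%:R : R[i]) != 0 by rewrite pnatr_eq0 -lt0n stab_card_gt0.
have s_inv : (s%:R : R[i]) * (s%:R^-1 : R)%:C%C = 1 by rewrite fmorphV rmorph_nat mulfV.
apply: (mulfI s_neq0); rewrite stab_card_mul_Dop_mW // mulrDr mulrCA stab_card_mul_ev_mW //.
rewrite mulrA s_inv mul1r dot_rho_g rmorphD mulrDl -addrA; congr (_ + _).
rewrite rmorph_sum mulr_suml -big_split /=; apply: eq_big_seq => b bP.
have bR : b \in Rs by move: bP; rewrite mem_posroots => /andP [].
rewrite (Dcoef_sum_fold g hRs v_reg x_reg bR) ?lam_weight ?lam_dom // mulrDr.
congr (_ + _ * _); apply: eq_bigr => l _.
by rewrite natrM mulrAC stab_card_mul_ev_mW // mulr_natr.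
Qed.
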